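(* Let $M$ be an infinite cancellative finitely generated hyperbolic monoid. Then $M$ contains an element of infinite order.
   Context: Cancellative means both left and right cancellative. For a monoid $M$ with finite generating set $A$, the (right) Cayley digraph has vertex set $M$ and a directed edge from $m$ to $ma$ for every $m\in M$, $a\in A$. For a digraph $D$, a directed path $x_0x_1\ldots x_n$ has edges $x_ix_{i+1}$ and length $n$; $d(x,y)$ is the length of a shortest directed $x$-$y$ path ($\infty$ if none), and such a shortest path is an $x$-$y$ geodesic. The out-ball $\mathcal{B}^+_k(x)$ is $\{y: d(x,y)\le k\}$, the in-ball $\mathcal{B}^-_k(x)$ is $\{y: d(y,x)\le k\}$; for a vertex set or path $Q$, $\mathcal{B}^\pm_k(Q)$ is the union of the corresponding balls around its vertices. A geodesic triangle consists of three vertices and, for each pair of them, a geodesic between them (in one of the two directions); these are its sides. It is $\delta$-thin if whenever $P,Q,R$ are its sides such that the start vertex of $P$ is the start or end vertex of $Q$ and the end vertex of $P$ is the start or end vertex of $R$, then $P\subseteq \mathcal{B}^+_\delta(Q)\cup\mathcal{B}^-_\delta(R)$. A digraph is $\delta$-hyperbolic if all its geodesic triangles are $\delta$-thin, and hyperbolic if it is $\delta$-hyperbolic for some $\delta\ge 0$. A finitely generated monoid is hyperbolic if its Cayley digraph with respect to a finite generating set is hyperbolic. *)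

From Stdlib Require Import List.
Import ListNotations.
Set Implicit Arguments.

Record Monoid := {
  carrier :> Type;
  mmul : carrier -> carrier -> carrier;
  mone : carrier;
  mmulA : forall x y z, mmul x (mmul y z) = mmul (mmul x y) z;
  mmul1l : forall x, mmul mone x = x;
  mmul1r : forall x, mmul x mone = x
}.

Definition cancellative (M : Monoid) : Prop :=
  (forall a x y : M, mmul M a x = mmul M a y -> x = y) /\
  (forall a x y : M, mmul M x a = mmul M y a -> x = y).

Definition generates {M : Monoid} (A : list M) : Prop :=
  forall x : M, exists w : list M,
    Forall (fun a => In a A) w /\ x = fold_right (mmul M) (mone M) w.

Definition finitely_generated (M : Monoid) : Prop :=
  exists A : list M, generates A.

Definition infinite_monoid (M : Monoid) : Prop :=
  ~ (exists l : list M, forall x : M, In x l).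

Fixpoint mpow {M : Monoid} (x : M) (n : nat) : M :=
  match n with 0 => mone M | S k => mmul M x (mpow x k) end.

Definition infinite_order {M : Monoid} (x : M) : Prop :=
  forall m n : nat, mpow x m = mpow x n -> m = n.

Section Digraph.
Variable V : Type.
Variable E : V -> V -> Prop.

(** [dpath x l]: x :: l is a directed path; its end vertex is [last l x]
    and its length is [length l]. *)
Fixpoint dpath (x : V) (l : list V) : Prop :=
  match l with
  | [] => True
  | y :: l' => E x y /\ dpath y l'
  end.

Definition dist_le (x y : V) (k : nat) : Prop :=
  exists l, dpath x l /\ last l x = y /\ length l <= k.

(** A side: start vertex together with the rest of the path. *)
Definition side := (V * list V)%type.
Definition sstart (s : side) : V := fst s.
Definition send (s : side) : V := last (snd s) (fst s).
Definition on_side (s : side) (z : V) : Prop := In z (fst s :: snd s).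

Definition geodesic (s : side) : Prop :=
  dpath (fst s) (snd s) /\
  forall l', dpath (fst s) l' -> last l' (fst s) = send s ->
             length (snd s) <= length l'.

Definition connects (s : side) (a b : V) : Prop :=
  (sstart s = a /\ send s = b) \/ (sstart s = b /\ send s = a).

Definition geodesic_triangle (a b c : V) (P1 P2 P3 : side) : Prop :=
  geodesic P1 /\ geodesic P2 /\ geodesic P3 /\
  connects P1 a b /\ connects P2 b c /\ connects P3 a c.

(** The thinness condition for an ordered choice (P,Q,R) of the sides:
    P ⊆ B^+_δ(Q) ∪ B^-_δ(R). *)
Definition thin_cond (d : nat) (P Q R : side) : Prop :=
  (sstart P = sstart Q \/ sstart P = send Q) ->
  (send P = sstart R \/ send P = send R) ->
  forall z, on_side P z ->
    (exists q, on_side Q q /\ dist_le q z d) \/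
    (exists r, on_side R r /\ dist_le z r d).

Definition triangle_thin (d : nat) (P1 P2 P3 : side) : Prop :=
  thin_cond d P1 P2 P3 /\ thin_cond d P1 P3 P2 /\
  thin_cond d P2 P1 P3 /\ thin_cond d P2 P3 P1 /\
  thin_cond d P3 P1 P2 /\ thin_cond d P3 P2 P1.

Definition delta_hyperbolic (d : nat) : Prop :=
  forall a b c P1 P2 P3, geodesic_triangle a b c P1 P2 P3 ->
    triangle_thin d P1 P2 P3.

Definition hyperbolic_digraph : Prop := exists d : nat, delta_hyperbolic d.
End Digraph.

Definition cayley_edge {M : Monoid} (A : list M) (m m' : M) : Prop :=
  exists a, In a A /\ m' = mmul M m a.

Definition hyperbolic_monoid (M : Monoid) : Prop :=
  exists A : list M, generates A /\ hyperbolic_digraph (cayley_edge A).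

(* If no element had infinite order, left cancellation would make every element
   invertible, so M would be a group.  In a group whose Cayley digraph is
   δ-hyperbolic, Cannon's argument shows that the cone of g (the h with
   |gh| = |g| + |h|) is determined, as soon as |g| > δ, by the tail type of g:
   the values |g y⁻¹| - |g| for |y| <= 2δ + 1.  There are finitely many tail
   types, so two points g_i, g_j (δ < i < j) of a long geodesic from 1 have the
   same one.  Then u = g_i⁻¹ g_j lies in the cone of g_i and g_i u has the same
   cone as g_i, so |g_i uⁿ| = |g_i| + n |u| for all n, and u has infinite
   order. *)

From Stdlib Require Import List Lia ZArith Wf_nat Classical ClassicalEpsilon.
Import ListNotations.

Lemma last_cons {V : Type} (x y : V) l : last (y :: l) x = last l y.
Proof.
  revert x y; induction l as [|z l IH]; intros x y; [reflexivity|].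
  change (last (z :: l) x = last (z :: l) y). rewrite (IH x z), (IH y z). reflexivity.
Qed.

Lemma last_map {U V : Type} (f : U -> V) l x : last (map f l) (f x) = f (last l x).
Proof.
  revert x; induction l as [|y l IH]; intros x; [reflexivity|].
  simpl map. rewrite !last_cons. apply IH.
Qed.

Lemma last_app {V : Type} (l1 l2 : list V) x : last (l1 ++ l2) x = last l2 (last l1 x).
Proof.
  revert x; induction l1 as [|y l1 IH]; intros x; [reflexivity|].
  simpl app. rewrite !last_cons. apply IH.
Qed.

Section Paths.
Context {V : Type} (E : V -> V -> Prop).

Lemma dpath_app x l1 l2 :
  dpath E x l1 -> dpath E (last l1 x) l2 -> dpath E x (l1 ++ l2).
Proof.
  revert x; induction l1 as [|y l1 IH]; intros x H1 H2; [exact H2|].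
  destruct H1 as [Hxy Hy]. rewrite last_cons in H2. split; auto.
Qed.

Lemma dist_le_refl x : dist_le E x x 0.
Proof. exists []; simpl; auto. Qed.

Lemma dist_le_weaken x y m n : m <= n -> dist_le E x y m -> dist_le E x y n.
Proof. intros Hmn (l & Hp & Hl & Hm); exists l; repeat split; auto; lia. Qed.

Lemma dist_le_trans x y z m n :
  dist_le E x y m -> dist_le E y z n -> dist_le E x z (m + n).
Proof.
  intros (l1 & Hp1 & Hl1 & Hm) (l2 & Hp2 & Hl2 & Hn).
  exists (l1 ++ l2); repeat split.
  - apply dpath_app; [exact Hp1|]. rewrite Hl1; exact Hp2.
  - rewrite last_app, Hl1; exact Hl2.
  - rewrite length_app; lia.
Qed.

Lemma dist_le_edge x y : E x y -> dist_le E x y 1.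
Proof. intros H; exists [y]; simpl; auto. Qed.

Lemma dpath_nth x l dft j : dpath E x l -> j < length l ->
  E (nth j (x :: l) dft) (nth (S j) (x :: l) dft).
Proof.
  revert x j; induction l as [|y l IH]; intros x j Hp Hj; [simpl in Hj; lia|].
  destruct Hp as [Hxy Hp]. destruct j as [|j]; [exact Hxy|].
  apply (IH y j Hp). simpl in Hj; lia.
Qed.

Lemma dist_le_nth x l dft i j : dpath E x l -> i <= j <= length l ->
  dist_le E (nth i (x :: l) dft) (nth j (x :: l) dft) (j - i).
Proof.
  intros Hp [Hij Hj]. revert Hj; induction Hij as [|j Hij IH]; intros Hj.
  - rewrite Nat.sub_diag. apply dist_le_refl.
  - replace (S j - i) with (j - i + 1) by lia.
    apply dist_le_trans with (nth j (x :: l) dft); [apply IH; lia|].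
    apply dist_le_edge, dpath_nth; [exact Hp | lia].
Qed.

Lemma nth_length_last (x : V) l dft : nth (length l) (x :: l) dft = last l x.
Proof.
  revert x; induction l as [|y l IH]; intros x; [reflexivity|].
  rewrite last_cons, <- IH. reflexivity.
Qed.

Lemma dist_le_on_path x l z : dpath E x l -> In z (x :: l) ->
  exists a b, a + b = length l /\ dist_le E x z a /\ dist_le E z (last l x) b.
Proof.
  intros Hp Hz. destruct (In_nth _ _ x Hz) as (i & Hi & <-). simpl in Hi.
  exists i, (length l - i). split; [lia|]. split.
  - pose proof (dist_le_nth x l x 0 i Hp ltac:(lia)) as H.
    rewrite Nat.sub_0_r in H. exact H.
  - rewrite <- (nth_length_last x l x). apply dist_le_nth; [exact Hp | lia].
Qed.

End Paths.

Lemma pigeonhole {T : Type} (f : nat -> T) (D : list T) n :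
  (forall i, i <= n -> In (f i) D) -> length D <= n ->
  exists i j, i < j <= n /\ f i = f j.
Proof.
  intros HD Hn. apply NNPP; intros Hno.
  assert (Hnd : NoDup (map f (seq 0 (S n)))).
  { apply NoDup_map_NoDup_ForallPairs; [|apply seq_NoDup].
    intros a b Ha Hb Hf. apply in_seq in Ha, Hb.
    destruct (lt_eq_lt_dec a b) as [[H|H]|H]; auto; exfalso; apply Hno.
    - exists a, b; split; [lia | exact Hf].
    - exists b, a; split; [lia | auto]. }
  apply NoDup_incl_length with (l' := D) in Hnd.
  - rewrite length_map, length_seq in Hnd. lia.
  - intros z Hz. apply in_map_iff in Hz as (i & <- & Hi).
    apply in_seq in Hi. apply HD. lia.
Qed.

Fixpoint all_lists {T : Type} (R : list T) (n : nat) : list (list T) :=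
  match n with
  | 0 => [[]]
  | S n => flat_map (fun a => map (cons a) (all_lists R n)) R
  end.

Lemma in_all_lists {T : Type} (R : list T) n l :
  In l (all_lists R n) <-> Forall (fun a => In a R) l /\ length l = n.
Proof.
  revert l; induction n as [|n IH]; intros l; simpl.
  - split; [intros [<-|[]]; auto|]. intros [_ H]. destruct l; [auto | discriminate].
  - rewrite in_flat_map. split.
    + intros (a & Ha & Hl). apply in_map_iff in Hl as (l' & <- & Hl').
      apply IH in Hl' as [HR Hn]. simpl; auto.
    + intros [HR Hn]. destruct l as [|a l]; [discriminate|].
      apply Forall_cons_iff in HR as [Ha HR].
      exists a; split; [exact Ha|]. apply in_map, IH. simpl in Hn; auto.
Qed.

Definition zrange (a b : nat) : list Z :=
  map (fun n => Z.of_nat n - Z.of_nat a)%Z (seq 0 (a + b + 1)).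

Lemma in_zrange a b z : (- Z.of_nat a <= z <= Z.of_nat b)%Z -> In z (zrange a b).
Proof.
  intros Hz. apply in_map_iff. exists (Z.to_nat (z + Z.of_nat a)).
  split; [lia|]. apply in_seq. lia.
Qed.

Section Powers.
Context {M : Monoid}.
Local Notation "x * y" := (mmul M x y).

Lemma mpow_add (x : M) m n : mpow x (m + n) = mpow x m * mpow x n.
Proof.
  induction m as [|m IH]; simpl; [rewrite mmul1l; reflexivity|].
  rewrite IH, mmulA. reflexivity.
Qed.

Lemma mpow_succ_r (x : M) n : mpow x (S n) = mpow x n * x.
Proof.
  induction n as [|n IH]; simpl in *; [rewrite mmul1l, mmul1r; reflexivity|].
  rewrite <- mmulA, <- IH. reflexivity.
Qed.

Lemma unit_of_mpow_eq (x : M) m k :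
  (forall a y z : M, a * y = a * z -> y = z) ->
  mpow x m = mpow x (m + S k) -> x * mpow x k = mone M /\ mpow x k * x = mone M.
Proof.
  intros Hcancel Heq.
  assert (H1 : mpow x (S k) = mone M).
  { symmetry. apply (Hcancel (mpow x m)). rewrite mmul1r, <- mpow_add. exact Heq. }
  split; [exact H1|]. rewrite <- mpow_succ_r. exact H1.
Qed.

Lemma unit_of_not_infinite_order (x : M) :
  (forall a y z : M, a * y = a * z -> y = z) ->
  ~ infinite_order x -> exists y, x * y = mone M /\ y * x = mone M.
Proof.
  intros Hcancel Hx. apply NNPP; intros Hno; apply Hx; intros m n Heq.
  destruct (Nat.lt_total m n) as [Hlt|[Hmn|Hlt]]; [exfalso | exact Hmn | exfalso]; apply Hno.
  - exists (mpow x (n - m - 1)). apply (unit_of_mpow_eq x m); [exact Hcancel|].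
    replace (m + S (n - m - 1)) with n by lia. exact Heq.
  - exists (mpow x (m - n - 1)). apply (unit_of_mpow_eq x n); [exact Hcancel|].
    replace (n + S (m - n - 1)) with m by lia. symmetry; exact Heq.
Qed.

End Powers.

Section Cones.
Context {M : Monoid} (len : M -> nat).
Hypothesis len_subadd : forall x y, len (mmul M x y) <= len x + len y.
Local Notation "x * y" := (mmul M x y).

Definition cone (g h : M) : Prop := len (g * h) = len g + len h.

Definition same_cone (g1 g2 : M) : Prop := forall h, cone g1 h <-> cone g2 h.

Lemma cone_mul g u h : cone g u -> (cone (g * u) h <-> cone g (u * h) /\ cone u h).
Proof.
  unfold cone; intros Hgu.
  pose proof (len_subadd g (u * h)). pose proof (len_subadd u h).
  pose proof (len_subadd (g * u) h). rewrite mmulA in *.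
  split; intros Hh; [split|]; lia.
Qed.

Lemma same_cone_mul g1 g2 u : same_cone g1 g2 -> cone g1 u -> same_cone (g1 * u) (g2 * u).
Proof.
  intros Hc Hu h. assert (Hu2 : cone g2 u) by (apply Hc; exact Hu).
  rewrite (cone_mul _ _ _ Hu), (cone_mul _ _ _ Hu2), (Hc (u * h)). tauto.
Qed.

Lemma same_cone_mpow g u : same_cone g (g * u) -> cone g u ->
  forall n, same_cone g (g * mpow u n).
Proof.
  intros Hc Hu n; induction n as [|n IH]; intros h.
  - simpl. rewrite mmul1r. tauto.
  - pose proof (same_cone_mul _ _ u IH Hu h) as Hn.
    rewrite <- mmulA, <- mpow_succ_r in Hn. rewrite (Hc h). exact Hn.
Qed.

Lemma infinite_order_of_cone g u : same_cone g (g * u) -> cone g u -> len u <> 0 ->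
  infinite_order u.
Proof.
  intros Hc Hu Hu0.
  assert (Hlen : forall n, len (g * mpow u n) = len g + n * len u).
  { induction n as [|n IH]; [simpl; rewrite mmul1r; lia|].
    assert (Hn : cone (g * mpow u n) u) by (apply (same_cone_mpow g u Hc Hu n); exact Hu).
    unfold cone in Hn. rewrite mpow_succ_r, mmulA, Hn, IH. lia. }
  intros m n Hmn. pose proof (Hlen m) as Hm. rewrite Hmn, Hlen in Hm.
  apply (Nat.mul_cancel_r _ _ (len u) Hu0). lia.
Qed.

End Cones.

Section HyperbolicGroup.
Variables (M : Monoid) (A : list M) (inv : M -> M).
Hypothesis mulV : forall x, mmul M x (inv x) = mone M.
Hypothesis Vmul : forall x, mmul M (inv x) x = mone M.
Hypothesis generates_A : generates A.
Local Notation "x * y" := (mmul M x y).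
Local Notation e := (mone M).
Local Notation E := (cayley_edge A).

Lemma mulKg x z : inv x * (x * z) = z.
Proof. rewrite mmulA, Vmul, mmul1l. reflexivity. Qed.

Lemma mulKVg x z : x * (inv x * z) = z.
Proof. rewrite mmulA, mulV, mmul1l. reflexivity. Qed.

Lemma inv_unique x y : x * y = e -> inv x = y.
Proof. intros H. rewrite <- (mmul1r M (inv x)), <- H, mulKg. reflexivity. Qed.

Lemma inv_one : inv e = e.
Proof. apply inv_unique, mmul1l. Qed.

Lemma dpath_translate g y l : dpath E y l -> dpath E (g * y) (map (mmul M g) l).
Proof.
  revert y; induction l as [|z l IH]; intros y Hp; [exact I|].
  destruct Hp as [(a & Ha & ->) Hp].
  split; [exists a; split; [exact Ha | apply mmulA] | apply IH; exact Hp].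
Qed.

Lemma dist_le_translate g x y n : dist_le E x y n -> dist_le E (g * x) (g * y) n.
Proof.
  intros (l & Hp & Hl & Hn). exists (map (mmul M g) l).
  rewrite last_map, Hl, length_map. auto using dpath_translate.
Qed.

Lemma dist_le_word w y : Forall (fun a => In a A) w ->
  dist_le E y (y * fold_right (mmul M) e w) (length w).
Proof.
  revert y; induction w as [|a w IH]; intros y Hw; simpl.
  - rewrite mmul1r. apply dist_le_refl.
  - apply Forall_cons_iff in Hw as [Ha Hw].
    apply dist_le_trans with (m := 1) (y := y * a).
    + apply dist_le_edge. exists a; auto.
    + rewrite mmulA. apply IH; exact Hw.
Qed.

Lemma dpath_word y l : dpath E y l ->
  exists w, Forall (fun a => In a A) w /\ length w = length l /\
            last l y = y * fold_right (mmul M) e w.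
Proof.
  revert y; induction l as [|z l IH]; intros y Hp.
  - exists []; simpl. rewrite mmul1r. auto.
  - destruct Hp as [(a & Ha & ->) Hp]. destruct (IH _ Hp) as (w & Hw & Hlen & Hlast).
    exists (a :: w). rewrite last_cons, Hlast. simpl. rewrite mmulA. auto.
Qed.

Lemma least_word_length x :
  exists n, dist_le E e x n /\ forall m, dist_le E e x m -> n <= m.
Proof.
  destruct (dec_inh_nat_subset_has_unique_least_element (dist_le E e x))
    as (n & Hn & _); [intros n; apply classic| |exists n; exact Hn].
  destruct (generates_A x) as (w & Hw & Hx). exists (length w).
  pose proof (dist_le_word w e Hw) as H. rewrite mmul1l, <- Hx in H. exact H.
Qed.

Definition len (x : M) : nat :=
  proj1_sig (constructive_indefinite_description _ (least_word_length x)).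

Lemma len_spec x : dist_le E e x (len x).
Proof.
  unfold len. destruct constructive_indefinite_description as (n & Hn & Hmin). exact Hn.
Qed.

Lemma len_min x n : dist_le E e x n -> len x <= n.
Proof.
  unfold len. destruct constructive_indefinite_description as (m & Hm & Hmin). exact (Hmin n).
Qed.

Lemma len_mul x y : len (x * y) <= len x + len y.
Proof.
  apply len_min. apply dist_le_trans with x; [apply len_spec|].
  rewrite <- (mmul1r M x) at 1. apply dist_le_translate, len_spec.
Qed.

Lemma dist_le_iff x y n : dist_le E x y n <-> len (inv x * y) <= n.
Proof.
  split; intros H.
  - apply len_min. rewrite <- (Vmul x). apply dist_le_translate; exact H.
  - apply dist_le_weaken with (len (inv x * y)); [exact H|].
    pose proof (dist_le_translate x _ _ _ (len_spec (inv x * y))) as H'.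
    rewrite mmul1r, mulKVg in H'. exact H'.
Qed.

Lemma exists_geodesic x y :
  exists l, geodesic E (x, l) /\ last l x = y /\ length l = len (inv x * y).
Proof.
  destruct (proj2 (dist_le_iff x y _) (le_n _)) as (l & Hp & Hl & Hn).
  assert (Hmin : forall l', dpath E x l' -> last l' x = y -> len (inv x * y) <= length l').
  { intros l' Hp' Hl'. apply dist_le_iff. exists l'; auto. }
  pose proof (Hmin l Hp Hl). exists l; split; [split|split; [exact Hl | lia]].
  - exact Hp.
  - intros l' Hp' Hl'. unfold send in Hl'; simpl in Hp', Hl' |- *.
    rewrite Hl in Hl'. specialize (Hmin l' Hp' Hl'). lia.
Qed.

Lemma geodesic_chain x : exists g : nat -> M,
  (forall i, i <= len x -> len (g i) = i) /\
  (forall i j, i <= j <= len x -> len (inv (g i) * g j) <= j - i).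
Proof.
  destruct (exists_geodesic e x) as (l & [Hp _] & Hl & Hn).
  rewrite inv_one, mmul1l in Hn.
  exists (fun i => nth i (e :: l) e); split.
  - intros i Hi. apply Nat.le_antisymm.
    + pose proof (dist_le_nth E e l e 0 i Hp ltac:(lia)) as H.
      rewrite Nat.sub_0_r in H. exact (len_min _ _ H).
    + pose proof (dist_le_nth E e l e i (length l) Hp ltac:(lia)) as H.
      rewrite nth_length_last, Hl in H. apply dist_le_iff in H.
      pose proof (len_mul (nth i (e :: l) e) (inv (nth i (e :: l) e) * x)) as Hx.
      rewrite mulKVg in Hx. lia.
  - intros i j Hij. apply dist_le_iff, dist_le_nth; [exact Hp | lia].
Qed.

Definition ball (k : nat) : list M :=
  map (fold_right (mmul M) e) (flat_map (all_lists A) (seq 0 (S k))).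

Lemma in_ball x k : In x (ball k) <-> len x <= k.
Proof.
  unfold ball; rewrite in_map_iff. split.
  - intros (w & <- & Hw). apply in_flat_map in Hw as (n & Hn & Hw).
    apply in_all_lists in Hw as [HwA <-]. apply in_seq in Hn.
    apply len_min, dist_le_weaken with (length w); [lia|].
    pose proof (dist_le_word w e HwA) as H. rewrite mmul1l in H. exact H.
  - intros Hx. destruct (len_spec x) as (l & Hp & Hl & Hn).
    destruct (dpath_word e l Hp) as (w & HwA & Hwl & Hlast).
    rewrite mmul1l, Hl in Hlast. exists w; split; [symmetry; exact Hlast|].
    apply in_flat_map. exists (length w); split; [apply in_seq; lia|].
    apply in_all_lists; auto.
Qed.

Lemma exists_long_element n : infinite_monoid M -> exists x, n < len x.
Proof.
  intros Hinf. apply NNPP; intros Hno. apply Hinf. exists (ball n). intros x.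
  apply in_ball, Nat.nlt_ge. intros Hx. apply Hno; exists x; exact Hx.
Qed.

Definition tail_type (k : nat) (g : M) : list Z :=
  map (fun y => Z.sub (Z.of_nat (len (g * inv y))) (Z.of_nat (len g))) (ball k).

Definition tail_types (k : nat) : list (list Z) :=
  all_lists (zrange k (list_max (map (fun y => len (inv y)) (ball k)))) (length (ball k)).

Lemma tail_type_in k g : In (tail_type k g) (tail_types k).
Proof.
  apply in_all_lists. split; [|apply length_map].
  apply Forall_forall; intros z Hz. apply in_map_iff in Hz as (y & <- & Hy).
  apply in_zrange.
  set (lens := map (fun y => len (inv y)) (ball k)).
  assert (Hinv_y : len (inv y) <= list_max lens).
  { pose proof (proj1 (list_max_le lens _) (le_n _)) as Hmax.
    rewrite Forall_forall in Hmax. apply Hmax, (in_map (fun y => len (inv y))), Hy. }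
  apply in_ball in Hy.
  pose proof (len_mul g (inv y)) as Hup.
  pose proof (len_mul (g * inv y) y) as Hlow. rewrite <- mmulA, Vmul, mmul1r in Hlow.
  lia.
Qed.

Variable d : nat.
Hypothesis hyperbolic_E : delta_hyperbolic E d.

Lemma thin_shortcut g w : d + 1 <= len g -> len (g * w) < len g + len w ->
  exists r, len r + len (inv r * (g * w)) < len g + len w /\ len (inv r * g) <= 2 * d + 1.
Proof.
  intros Hg Hshort.
  destruct (exists_geodesic e g) as (l1 & Hgeo1 & Hlast1 & Hlen1).
  destruct (exists_geodesic g (g * w)) as (l2 & Hgeo2 & Hlast2 & Hlen2).
  destruct (exists_geodesic e (g * w)) as (l3 & Hgeo3 & Hlast3 & Hlen3).
  rewrite inv_one, mmul1l in Hlen1, Hlen3. rewrite mulKg in Hlen2.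
  (* s lies d + 1 before g on the side [1, g].  By thinness it is d-close either to a
     point of [1, gw], which then serves as r, or to [g, gw], and then r := s. *)
  set (k := len g - (d + 1)).
  set (s := nth k (e :: l1) e).
  assert (Hs : In s (e :: l1)) by (apply nth_In; simpl; lia).
  assert (Hs1 : len s <= k).
  { pose proof (dist_le_nth E e l1 e 0 k (proj1 Hgeo1) ltac:(lia)) as H.
    rewrite Nat.sub_0_r in H. exact (len_min _ _ H). }
  assert (Hs2 : dist_le E s g (d + 1)).
  { pose proof (dist_le_nth E e l1 e k (length l1) (proj1 Hgeo1) ltac:(lia)) as H.
    rewrite nth_length_last, Hlast1 in H.
    replace (d + 1) with (length l1 - k) by lia. exact H. }
  assert (Htri : geodesic_triangle E e g (g * w) (e, l1) (g, l2) (e, l3)).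
  { split; [exact Hgeo1|]. split; [exact Hgeo2|]. split; [exact Hgeo3|].
    repeat split; left; split; assumption || reflexivity. }
  destruct (hyperbolic_E _ _ _ _ _ _ Htri) as (_ & Hthin & _).
  destruct (Hthin (or_introl eq_refl) (or_introl Hlast1) s Hs)
    as [(q & Hq & Hqs) | (q & Hq & Hsq)].
  - destruct (dist_le_on_path E e l3 q (proj1 Hgeo3) Hq) as (a & b & Hab & Ha & Hb).
    rewrite Hlast3 in Hb. apply len_min in Ha. apply dist_le_iff in Hb.
    exists q; split; [lia|]. apply dist_le_iff.
    replace (2 * d + 1) with (d + (d + 1)) by lia. apply dist_le_trans with s; assumption.
  - destruct (dist_le_on_path E g l2 q (proj1 Hgeo2) Hq) as (a & b & Hab & Ha & Hb).
    rewrite Hlast2 in Hb. pose proof (dist_le_trans E _ _ _ _ _ Hsq Hb) as Hsx.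
    apply dist_le_iff in Hsx, Hs2.
    exists s; split; lia.
Qed.

Lemma cone_transfer g g' w : d + 1 <= len g' ->
  tail_type (2 * d + 1) g = tail_type (2 * d + 1) g' -> cone len g w -> cone len g' w.
Proof.
  unfold cone; intros Hg' Htail Hcone.
  apply Nat.le_antisymm; [apply len_mul|]. apply Nat.nlt_ge; intros Hshort.
  destruct (thin_shortcut g' w Hg' Hshort) as (r & Hr & Hy).
  set (y := inv r * g') in Hy.
  assert (Hinv_y : inv y = inv g' * r).
  { apply inv_unique. unfold y. rewrite <- mmulA, mulKVg. apply Vmul. }
  pose proof (proj1 map_ext_in_iff Htail y (proj2 (in_ball y _) Hy)) as Hty.
  cbn beta in Hty. rewrite Hinv_y, mulKVg in Hty.
  assert (Hgw : g * w = (g * (inv g' * r)) * (inv r * (g' * w))).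
  { rewrite <- !mmulA, mulKVg, mulKg. reflexivity. }
  pose proof (len_mul (g * (inv g' * r)) (inv r * (g' * w))) as Hsplit.
  rewrite <- Hgw in Hsplit. lia.
Qed.

Theorem hyperbolic_group_has_infinite_order :
  infinite_monoid M -> exists u : M, infinite_order u.
Proof.
  intros Hinf.
  set (T := tail_types (2 * d + 1)).
  destruct (exists_long_element (d + 1 + length T) Hinf) as [x Hx].
  destruct (geodesic_chain x) as (g & Hlen & Hdist).
  destruct (pigeonhole (fun k => tail_type (2 * d + 1) (g (d + 1 + k))) T (length T))
    as (k1 & k2 & Hk & Htail); [intros; apply tail_type_in | lia |].
  set (i := d + 1 + k1) in Htail. set (j := d + 1 + k2) in Htail.
  set (u := inv (g i) * g j).
  assert (Hgu : g i * u = g j) by apply mulKVg.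
  assert (Hi : len (g i) = i) by (apply Hlen; lia).
  assert (Hj : len (g j) = j) by (apply Hlen; lia).
  assert (Hu : len u = j - i).
  { pose proof (Hdist i j ltac:(lia)) as Hle. fold u in Hle.
    pose proof (len_mul (g i) u) as Hge. rewrite Hgu in Hge. lia. }
  assert (Hcone : cone len (g i) u) by (unfold cone; rewrite Hgu; lia).
  assert (Hsame : same_cone len (g i) (g i * u)).
  { rewrite Hgu. intros h; split; apply cone_transfer; try lia; congruence. }
  exists u. apply (infinite_order_of_cone len len_mul (g i)); [exact Hsame | exact Hcone |].
  lia.
Qed.

End HyperbolicGroup.

Theorem theorem4p1 (M : Monoid) :
  infinite_monoid M -> cancellative M -> finitely_generated M ->
  hyperbolic_monoid M ->
  exists x : M, infinite_order x.
Proof.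
  intros Hinf [Hcancel _] _ (A & HA & d & Hhyp).
  destruct (classic (exists x : M, infinite_order x)) as [Hx|Hnone]; [exact Hx|].
  assert (Hunit : forall x : M, exists y, mmul M x y = mone M /\ mmul M y x = mone M).
  { intros x. apply unit_of_not_infinite_order; [exact Hcancel|].
    intros Hx; apply Hnone; exists x; exact Hx. }
  destruct (choice _ Hunit) as [inv Hinv].
  exact (hyperbolic_group_has_infinite_order M A inv
           (fun x => proj1 (Hinv x)) (fun x => proj2 (Hinv x)) HA d Hhyp Hinf).
Qed.
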